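(* In the family of directed acyclic graphs, the Geometric Mechanism satisfies incentive compatibility and fairness.
   Context: Setting: agents $N=\{1,\dots,n\}$ form a directed acyclic graph (DAG); an edge $(i,j)$ means $i$ follows $j$. Agent $i$'s type $\theta_i$ is her set of true out-edges; she reports $\theta_i'\subseteq\theta_i$ (she can only hide edges). $G(\theta')$ is the graph built from the report profile $\theta'$. $P_i$ is the set of agents that can reach $i$ by a directed path (including $i$), and $p_i=|P_i|$ is $i$'s progeny. Write $p_i\succ p_j$ if $p_i>p_j$, or $p_i=p_j$ and $i<j$. A selection mechanism maps each report profile to selection probabilities $x_i(\theta')\in[0,1]$ with $\sum_i x_i(\theta')\le 1$. Influential node: agent $i$ is influential in $G(\theta')$ if, after deleting all of $i$'s out-edges (profile $(\theta'_{-i},\emptyset)$), $p_i\succ p_j$ for all $j\neq i$ in that modified graph. The influential set $S^{inf.}(G(\theta'))=\{s_1,\dots,s_m\}$ is the set of influential nodes, ordered so that $s_1\succ s_2\succ\cdots\succ s_m$ by progeny in $G(\theta')$. Geometric Mechanism: compute $S^{inf.}(G(\theta'))=\{s_1,\dots,s_m\}$; select $s_j$ with probability $1/2^{m-j+1}$, and every agent outside the influential set with probability $0$. Incentive compatibility: for all $N$, all $i$, all true profiles $\theta$, all $\theta'_{-i}$ with $\theta'_k\subseteq\theta_k$ for $k\neq i$, and all $\theta_i'\subseteq\theta_i$, $x_i((\theta_i,\theta'_{-i}))\ge x_i((\theta_i',\theta'_{-i}))$. Fairness: for a graph $G=(N,E)$, let $G(i)=(P_i,E_i)$ be the subgraph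 induced by $i$'s progeny, with $E_i=\{(j,k)\in E: j,k\in P_i\}$. A mechanism is fair if for all $N$ and all DAGs $G,G'$ on $n$ nodes with $S^{inf.}(G)=S^{inf.}(G')=\{s_1,\dots,s_m\}$ and $G(s_1)=G'(s_1)$, we have $x_{s_1}(G)=x_{s_1}(G')$. *)

(* Agents are 'I_n (agent k <-> paper's agent k+1). *)
From mathcomp Require Import all_boot all_order all_algebra.
Set Implicit Arguments. Unset Strict Implicit. Unset Printing Implicit Defensive.
Import Order.TTheory GRing.Theory Num.Theory.

(* A (report) profile: theta i = set of out-edges of i (i follows j iff j \in theta i). *)
Definition profile (n : nat) := 'I_n -> {set 'I_n}.

Definition edge n (th : profile n) : rel 'I_n := fun i j => j \in th i.

Definition acyclic n (th : profile n) : Prop :=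
  forall i j : 'I_n, edge th i j -> ~~ connect (edge th) j i.

Definition progeny n (th : profile n) (i : 'I_n) : {set 'I_n} :=
  [set j | connect (edge th) j i].

Definition prog n (th : profile n) (i : 'I_n) : nat := #|progeny th i|.

Definition succ n (th : profile n) (i j : 'I_n) : bool :=
  (prog th j < prog th i)%N || ((prog th i == prog th j) && (i < j)%N).

Definition update n (th : profile n) (i : 'I_n) (s : {set 'I_n}) : profile n :=
  fun k => if k == i then s else th k.

Definition influential n (th : profile n) (i : 'I_n) : bool :=
  [forall j : 'I_n, (j != i) ==> succ (update th i set0) i j].

Definition inf_seq n (th : profile n) : seq 'I_n :=
  sort (fun a b => (a == b) || succ th a b) [seq i <- enum 'I_n | influential th i].

(* Geometric Mechanism: s_j (1-based index j) gets 1/2^(m-j+1); others get 0.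
   With 0-based index idx = j-1, m - j + 1 = m - idx. *)
Definition geometric n (th : profile n) (i : 'I_n) : rat :=
  (if influential th i
  then (((2 ^ (size (inf_seq th) - index i (inf_seq th)))%N)%:R)^-1
  else 0)%R.

From mathcomp Require Import all_boot all_order all_algebra.
From mathcomp Require Import zify.
From Stdlib Require Import FunctionalExtensionality.
Import Order.TTheory GRing.Theory Num.Theory.

(* Hiding out-edges cannot change whether i is influential, since that test
   deletes i's out-edges anyway; it only matters through i's rank among the
   influential nodes, where i gets probability 2^-c with c the number of
   influential nodes ranked at or below i.  Under the truthful report, every
   influential j ranked below i must reach i: otherwise deleting j's out-edges
   leaves p_i unchanged, and j would not beat i.  By acyclicity i cannot reach
   such a j, so p_j ignores i's out-edges, as does p_i, while every other
   progeny can only shrink when i hides edges.  Hence j stays influential and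
   below i, so c can only grow.  Fairness is immediate: s_1 gets 2^-m. *)

Set Implicit Arguments.
Unset Strict Implicit.
Unset Printing Implicit Defensive.

Lemma connect_sub_to (T : finType) (e1 e2 : rel T) y :
  (forall u v, u != y -> connect e1 u y -> e1 u v -> e2 u v) ->
  forall x, connect e1 x y -> connect e2 x y.
Proof.
move=> e12 x /connectP[p]; elim: p x => [x _ -> // | v p IHp x].
move=> /= /andP[e1xv p_v] y_last.
have [-> // | x_neq_y] := eqVneq x y.
have x_to_y : connect e1 x y by apply/connectP; exists (v :: p); rewrite //= e1xv.
exact: connect_trans (connect1 (e12 _ _ x_neq_y x_to_y e1xv)) (IHp _ p_v y_last).
Qed.

Lemma size_sub_index_sorted (T : eqType) (r : rel T) (s : seq T) x :
  reflexive r -> transitive r -> antisymmetric r ->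
  sorted r s -> x \in s -> size s - index x s = count (r x) s.
Proof.
move=> r_refl r_trans r_anti; elim: s => [//|y s IHs] /= r_ys.
have r_y_s := order_path_min r_trans r_ys.
have [<- _ | y_neq_x] := eqVneq y x.
  by move: r_y_s; rewrite r_refl subn0 add1n all_count => /eqP->.
rewrite in_cons eq_sym (negbTE y_neq_x) /= => x_in_s.
have r_yx : r y x by move/allP: r_y_s; apply.
have /negbTE-> : ~~ r x y.
  by apply: contraNN y_neq_x => r_xy; apply/eqP; apply: r_anti; rewrite r_yx.
by rewrite subSS IHs // (path_sorted r_ys).
Qed.

Section Progeny.
Variable n : nat.
Implicit Types (th : profile n) (i j u : 'I_n) (s : {set 'I_n}).

Lemma connect_profile_sub th1 th2 : (forall u, th1 u \subset th2 u) ->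
  subrel (connect (edge th1)) (connect (edge th2)).
Proof.
by move=> sub12; apply: connect_sub => u v uv; apply/connect1/(subsetP (sub12 u)).
Qed.

Lemma acyclic_sub th1 th2 : (forall u, th1 u \subset th2 u) ->
  acyclic th2 -> acyclic th1.
Proof.
move=> sub12 ac2 u v /(subsetP (sub12 u)) uv2; apply: contra (ac2 _ _ uv2).
exact: connect_profile_sub.
Qed.

Lemma acyclic_connect_eq th u v : acyclic th ->
  connect (edge th) u v -> connect (edge th) v u -> u = v.
Proof.
move=> ac /connectP[[|w p] /= p_uv -> //] vu; case/andP: p_uv => uw p_w.
have wv : connect (edge th) w (last w p) by apply/connectP; exists p.
by move: (ac _ _ uw); rewrite (connect_trans wv vu).
Qed.

Lemma progeny_sub th1 th2 j : (forall u, th1 u \subset th2 u) ->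
  progeny th1 j \subset progeny th2 j.
Proof.
by move=> sub12; apply/subsetP => u; rewrite !inE; apply: connect_profile_sub.
Qed.

Lemma eq_progeny th1 th2 j :
  {in progeny th1 j :|: progeny th2 j, forall u, u != j -> th1 u = th2 u} ->
  progeny th1 j = progeny th2 j.
Proof.
move=> eq12; apply/setP => x; rewrite !inE; apply/idP/idP; apply: connect_sub_to.
- by move=> u v u_neq_j u_j; rewrite /edge eq12 // !inE u_j.
- by move=> u v u_neq_j u_j; rewrite /edge eq12 // !inE u_j orbT.
Qed.

Lemma progeny_update_self th i s : progeny (update th i s) i = progeny th i.
Proof. by apply: eq_progeny => u _; rewrite /update => /negbTE->. Qed.

Lemma connect_drop_self th j i : connect (edge (update th j set0)) j i = (j == i).
Proof.
apply/idP/eqP => [|<-]; last exact: connect0.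
by case/connectP => -[_ -> // | w p]; rewrite /= /edge /update eqxx inE.
Qed.

Lemma progeny_drop_unreachable th i j : ~~ connect (edge th) j i ->
  progeny (update th j set0) i = progeny th i.
Proof.
move=> j_not_to_i; apply: eq_progeny => u; rewrite /update.
have [-> | //] := eqVneq u j.
by rewrite !inE connect_drop_self (negbTE j_not_to_i) orbF => /eqP->; rewrite eqxx.
Qed.

Definition succeq th i j := (i == j) || succ th i j.

Lemma succ_asym th i j : succ th i j -> ~~ succ th j i.
Proof. rewrite /succ; lia. Qed.

Lemma succ_mono th1 th2 i j :
  prog th2 i <= prog th1 i -> prog th1 j <= prog th2 j ->
  succ th2 i j -> succ th1 i j.
Proof. rewrite /succ; lia. Qed.

Lemma succeq_refl th : reflexive (succeq th).
Proof. by move=> i; rewrite /succeq eqxx. Qed.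

Lemma succeq_trans th : transitive (succeq th).
Proof.
move=> j i k /orP[/eqP-> // | ij] /orP[/eqP<- | jk]; rewrite /succeq ?ij ?orbT //.
by apply/orP; right; move: ij jk; rewrite /succ; lia.
Qed.

Lemma succeq_anti th : antisymmetric (succeq th).
Proof.
move=> i j; rewrite /succeq; have [// | _ /=] := eqVneq i j.
by case/andP=> /succ_asym/negPf->.
Qed.

Lemma succeq_total th : total (succeq th).
Proof.
move=> i j; rewrite /succeq /succ; have [// | ] := eqVneq i j.
rewrite -val_eqE /=; lia.
Qed.

Lemma mem_inf_seq th i : (i \in inf_seq th) = influential th i.
Proof. by rewrite mem_sort mem_filter mem_enum andbT. Qed.

Lemma geometricE th i : influential th i ->
  geometric th i =
    ((2 ^ count (fun j => influential th j && succeq th i j) (enum 'I_n))%:R)^-1%R.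
Proof.
move=> infl_i; rewrite /geometric infl_i.
rewrite (@size_sub_index_sorted _ (succeq th)) ?mem_inf_seq //.
- rewrite count_sort count_filter; congr (_%:R^-1)%R.
  by apply/congr1/eq_count => j; rewrite andbC.
- exact: succeq_refl.
- exact: succeq_trans.
- exact: succeq_anti.
- exact: sort_sorted (succeq_total th) _.
Qed.

Lemma influential_update th i s : influential (update th i s) i = influential th i.
Proof.
rewrite /influential; have -> // : update (update th i s) i set0 = update th i set0.
by apply: functional_extensionality => k; rewrite /update; case: (k == i).
Qed.

Lemma influential_succ_connect th i j :
  influential th j -> succ th i j -> connect (edge th) j i.
Proof.
move=> infl_j i_succ_j; apply/negPn/negP => j_not_to_i.
have i_neq_j : i != j by apply: contraTneq i_succ_j => ->; rewrite /succ ltnn eqxx ltnn.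
have := forallP infl_j i; rewrite i_neq_j /= /succ /prog.
rewrite progeny_update_self progeny_drop_unreachable //.
by apply/negP; apply: succ_asym.
Qed.

End Progeny.

Section HidingEdges.
Variables (n : nat) (G : profile n) (i : 'I_n) (s s' : {set 'I_n}).
Hypotheses (acyclic_truthful : acyclic (update G i s)) (hidden_sub : s' \subset s).
Local Notation Gtrue := (update G i s).
Local Notation Ghide := (update G i s').

Lemma update_hide_sub u : Ghide u \subset Gtrue u.
Proof. by rewrite /update; case: (u == i). Qed.

Lemma progeny_hide_self : progeny Ghide i = progeny Gtrue i.
Proof. by rewrite !progeny_update_self. Qed.

Lemma progeny_hide_above j : j != i -> j \in progeny Gtrue i ->
  progeny Ghide j = progeny Gtrue j.
Proof.
move=> j_neq_i j_to_i; apply: eq_progeny => u; rewrite /update.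
have [-> | //] := eqVneq u i; rewrite !inE => i_to_j _.
have {}i_to_j : connect (edge Gtrue) i j.
  by case/orP: i_to_j => // /(connect_profile_sub update_hide_sub).
rewrite inE in j_to_i.
by move: j_neq_i; rewrite (acyclic_connect_eq acyclic_truthful i_to_j j_to_i) eqxx.
Qed.

Lemma succeq_hide j : influential Gtrue j -> succeq Gtrue i j ->
  influential Ghide j && succeq Ghide i j.
Proof.
have [-> | j_neq_i] := eqVneq j i.
  by move=> + _; rewrite succeq_refl andbT !influential_update.
rewrite /succeq eq_sym (negbTE j_neq_i) /= => infl_j i_succ_j.
have j_to_i : j \in progeny Gtrue i by rewrite inE; apply: influential_succ_connect.
have progeny_j := progeny_hide_above j_neq_i j_to_i.
rewrite (succ_mono _ _ i_succ_j) /prog ?progeny_hide_self ?progeny_j // andbT.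
apply/forallP => k; apply/implyP => k_neq_j.
apply: succ_mono (implyP (forallP infl_j k) k_neq_j).
  by rewrite /prog !progeny_update_self progeny_j.
apply/subset_leq_card/progeny_sub => u; rewrite /update; case: (u == j) => //.
exact: update_hide_sub.
Qed.

End HidingEdges.

Local Open Scope ring_scope.

Theorem theorem1 :
  (* Incentive compatibility *)
  (forall (n : nat) (th th' : profile n) (i : 'I_n) (ti : {set 'I_n}),
     acyclic th ->
     (forall k : 'I_n, k != i -> th' k \subset th k) ->
     ti \subset th i ->
     geometric (update th' i ti) i <= geometric (update th' i (th i)) i)
  /\
  (* Fairness *)
  (forall (n : nat) (G G' : profile n) (s1 : 'I_n) (rest : seq 'I_n),
     acyclic G -> acyclic G' ->
     inf_seq G = s1 :: rest -> inf_seq G' = s1 :: rest ->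
     progeny G s1 = progeny G' s1 ->
     (forall j k : 'I_n, j \in progeny G s1 -> k \in progeny G s1 ->
        (k \in G j) = (k \in G' j)) ->
     geometric G s1 = geometric G' s1).
Proof.
split; last first.
  move=> n G G' s1 rest _ _ G_inf G'_inf _ _.
  by rewrite /geometric -!mem_inf_seq G_inf G'_inf mem_head.
move=> n th th' i ti acyclic_th others_sub ti_sub.
have acyclic_truthful : acyclic (update th' i (th i)).
  apply: acyclic_sub acyclic_th => u; rewrite /update.
  by have [-> // | /others_sub] := eqVneq u i.
have [infl_i | not_infl_i] := boolP (influential th' i); last first.
  by rewrite /geometric !influential_update (negbTE not_infl_i).
rewrite !geometricE ?influential_update // lef_pV2 ?posrE ?ltr0n ?expn_gt0 //.
rewrite ler_nat leq_exp2l //; apply: sub_count => j /andP[].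
exact: succeq_hide.
Qed.
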